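(* Let $p,q$ be positive integers with $p/q\ge4$, let $k=\lfloor p/q\rfloor$ and $r=p-kq$, and assume $r\ge1$. Let $t$ be the smallest positive integer with $(t+1)q\equiv r\pmod p$. Consider a graph containing an edge $uv$ together with two paths $P_{uv}=u\,x_0^{uv}x_1^{uv}\cdots x_t^{uv}\,v$ and $P_{vu}=v\,x_0^{vu}x_1^{vu}\cdots x_t^{vu}\,u$. Assign lists $L(x_0^{ab})=L(x_t^{ab})=[p-1,2q-1]$ and $L(x_i^{ab})=[iq,(i+2)q-1]$ for $1\le i\le t-1$, for $(a,b)\in\{(u,v),(v,u)\}$. If $\psi$ is a $(p,q)$-colouring of $P_{uv}\cup P_{vu}$ (including the edge $uv$) such that $\psi(x)\in L(x)$ for every internal vertex $x$ of the two paths, then $\psi(u)$ and $\psi(v)$ are not both contained in $S_0=[0,q+r-1]$.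
   Context: A $(p,q)$-colouring of a graph is a map $\psi$ from its vertex set to $\{0,\dots,p-1\}$ with $q\le|\psi(x)-\psi(y)|\le p-q$ for every edge $xy$. For $a,b\in\{0,\dots,p-1\}$ the interval $[a,b]$ denotes $\{a,a+1,\dots,b\}$ with arithmetic modulo $p$ (so e.g. $[p-1,2q-1]=\{p-1,0,1,\dots,2q-1\}$); all numbers appearing as interval endpoints are reduced modulo $p$. *)

From mathcomp Require Import all_boot.
Set Implicit Arguments. Unset Strict Implicit. Unset Printing Implicit Defensive.

Definition absdiff (a b : nat) : nat := (a - b) + (b - a).

Definition pq_edge (p q a b : nat) : bool :=
  [&& a < p, b < p, q <= absdiff a b & absdiff a b <= p - q].

(* cyclic interval [a,b] = {a, a+1, ..., b} modulo p, endpoints reduced mod p *)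
Definition in_cint (p a b x : nat) : bool :=
  (x < p) &&
  (if a %% p <= b %% p then (a %% p <= x) && (x <= b %% p)
   else (a %% p <= x) || (x <= b %% p)).

(* psi is a (p,q)-colouring of P_uv ∪ P_vu (including the edge uv), where
   P_uv = u xuv_0 ... xuv_t v and P_vu = v xvu_0 ... xvu_t u. *)
Definition pq_colouring_paths (T : Type) (p q t : nat) (psi : T -> nat)
    (u v : T) (xuv xvu : nat -> T) : Prop :=
  [/\ pq_edge p q (psi u) (psi v),
      pq_edge p q (psi u) (psi (xuv 0)),
      (forall i, i < t -> pq_edge p q (psi (xuv i)) (psi (xuv i.+1))) &
      pq_edge p q (psi (xuv t)) (psi v)] /\
  [/\ pq_edge p q (psi v) (psi (xvu 0)),
      (forall i, i < t -> pq_edge p q (psi (xvu i)) (psi (xvu i.+1))) &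
      pq_edge p q (psi (xvu t)) (psi u)].

Definition respects_lists (T : Type) (p q t : nat) (psi : T -> nat)
    (x : nat -> T) : Prop :=
  [/\ in_cint p (p - 1) (2 * q - 1) (psi (x 0)),
      in_cint p (p - 1) (2 * q - 1) (psi (x t)) &
      (forall i, 1 <= i <= t - 1 -> in_cint p (i * q) ((i + 2) * q - 1) (psi (x i)))].

From mathcomp Require Import all_boot zify.

(* Take psi(u) < psi(v), so that psi(u) < r and psi(v) >= q.  Measure the colour
   of x_i by its offset from the left end iq mod p of its list window.  Since
   p >= 4q, an edge between consecutive windows (shifted by q) cannot decrease
   the offset, so every offset along P_uv is at least psi(u) + q, starting with
   x_0 >= psi(u) + q.  The window of x_{t-1} starts at r + p - 2q (because
   (t+1)q = r mod p), so psi(x_{t-1}) lies in [r + p - q + psi(u), r + p - 1] modulo p,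
   and no colour of [p-1, 2q-1] for x_t is then compatible with both x_{t-1}
   and v. *)

Lemma modn_double_cases a p : a < p + p ->
  (a < p /\ a %% p = a) \/ (p <= a /\ a %% p = a - p).
Proof.
move=> a_lt; case: (ltnP a p) => a_p; first by left; rewrite modn_small.
right; split=> //.
by rewrite -{1}(subnK a_p) modnDr modn_small //; lia.
Qed.

Lemma modn_sub_of_addn a b r p : b <= p -> r < b ->
  (a + b) %% p = r -> a %% p = r + p - b.
Proof.
move=> b_le r_lt; rewrite -modnDml.
have p_gt0 : 0 < p by lia.
have := ltn_pmod a p_gt0; move: (a %% p) => m m_lt.
have [[? ->]|[? ->]] := modn_double_cases (m + b) p ltac:(lia); lia.
Qed.

Definition offset (p c x : nat) : nat := (x + p - c) %% p.

Lemma in_cint_offset p A B c L x : 0 < L <= p -> c < p -> A %% p = c ->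
  B %% p = (c + L - 1) %% p -> in_cint p A B x ->
  offset p c x < L /\ x = (c + offset p c x) %% p.
Proof.
move=> L_bd c_lt A_c B_c; rewrite /in_cint /offset A_c B_c {A_c B_c A B} => /andP[x_lt].
have p_gt0 : 0 < p by lia.
have [[? ->]|[? ->]] := modn_double_cases (c + L - 1) p ltac:(lia);
have [[? ->]|[? ->]] := modn_double_cases (x + p - c) p ltac:(lia);
case: ifP => ?; try (move=> /andP[? ?]); try (move=> /orP[?|?]); try lia;
  (split; [lia|]);
  first [ have -> : c + (x + p - c) = x + p by lia
        | have -> : c + (x + p - c - p) = x by lia ];
  by rewrite ?modnDr ?modn_small.
Qed.

(* Both colours lie in the arc [c, c + 3q) of length at most p - q, on which an
   edge forces the second colour to exceed the first by at least q. *)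
Lemma pq_edge_offset_le {p q c o1 o2} : 0 < q -> 4 * q <= p -> c < p ->
  o1 < 2 * q -> o2 < 2 * q ->
  pq_edge p q ((c + o1) %% p) (((c + q) %% p + o2) %% p) -> o1 <= o2.
Proof.
move=> q_gt0 p_ge c_lt o1_lt o2_lt.
have p_gt0 : 0 < p by lia.
rewrite /pq_edge /absdiff.
have [[? ->]|[? ->]] := modn_double_cases (c + o1) p ltac:(lia);
have [[? ->]|[? ->]] := modn_double_cases (c + q) p ltac:(lia);
[ have [[? ->]|[? ->]] := modn_double_cases (c + q + o2) p ltac:(lia)
| have [[? ->]|[? ->]] := modn_double_cases (c + q - p + o2) p ltac:(lia)
| have [[? ->]|[? ->]] := modn_double_cases (c + q + o2) p ltac:(lia)
| have [[? ->]|[? ->]] := modn_double_cases (c + q - p + o2) p ltac:(lia) ];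
move=> /and4P[? ? ? ?]; lia.
Qed.

Lemma in_cint_end_window p q y : 0 < q -> 2 * q <= p -> in_cint p (p - 1) (2 * q - 1) y ->
  y < p /\ (p - 1 <= y) || (y <= 2 * q - 1).
Proof.
move=> q_gt0 p_ge; rewrite /in_cint !modn_small; try lia.
by case: ifP => _ /andP[? ?]; split=> //; lia.
Qed.

Lemma pq_edge_to_end_window p q a y : 0 < q -> 4 * q <= p -> a.+1 < q ->
  y < p -> (p - 1 <= y) || (y <= 2 * q - 1) -> pq_edge p q a y ->
  a + q <= y < 2 * q.
Proof.
move=> q_gt0 p_ge a_lt y_lt y_end; rewrite /pq_edge /absdiff => /and4P[? ? ? ?].
by case/orP: y_end => ?; lia.
Qed.

Lemma pq_edges_through_end_window {p q r a o y b} :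
  0 < q -> 4 * q <= p -> r < q -> a < r -> a + q <= o < 2 * q ->
  q <= b <= q + r - 1 -> y < p -> (p - 1 <= y) || (y <= 2 * q - 1) ->
  pq_edge p q ((r + p - 2 * q + o) %% p) y -> pq_edge p q y b -> False.
Proof.
move=> q_gt0 p_ge r_lt a_lt o_bd b_bd y_lt y_end.
have p_gt0 : 0 < p by lia.
rewrite /pq_edge /absdiff.
have [[? ->]|[? ->]] := modn_double_cases (r + p - 2 * q + o) p ltac:(lia);
move=> /and4P[? ? ? ?] /and4P[? ? ? ?]; case/orP: y_end => ?; lia.
Qed.

Section OneDirection.

Variables (p q r t : nat) (T : Type) (psi : T -> nat) (u v : T) (x : nat -> T).

Hypotheses (q_gt0 : 0 < q) (p_ge4q : 4 * q <= p) (r_lt_q : r < q) (t_gt1 : 1 < t).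
Hypothesis window_before_last : ((t - 1) * q) %% p = r + p - 2 * q.
Hypotheses (psi_u : psi u < r) (psi_v : q <= psi v <= q + r - 1).
Hypotheses (edge_u : pq_edge p q (psi u) (psi (x 0)))
  (edge_path : forall i, i < t -> pq_edge p q (psi (x i)) (psi (x i.+1)))
  (edge_v : pq_edge p q (psi (x t)) (psi v))
  (lists : respects_lists p q t psi x).

Let p_gt0 : 0 < p. Proof. lia. Qed.
Let p_ge2q : 2 * q <= p. Proof. lia. Qed.

Let start i := (i * q) %% p.
Let ofs i := offset p (start i) (psi (x i)).

Lemma first_colour_bounds : psi u + q <= psi (x 0) < 2 * q.
Proof.
case: lists => /(in_cint_end_window p q _ q_gt0 p_ge2q) [? ?] _ _.
apply: pq_edge_to_end_window edge_u => //; lia.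
Qed.

Lemma window_offset i : i <= t - 1 ->
  ofs i < 2 * q /\ psi (x i) = (start i + ofs i) %% p.
Proof.
case: i => [_|i i_le].
  rewrite /ofs /start /offset mul0n mod0n add0n subn0 modnDr.
  have := first_colour_bounds => /andP[_ x0_lt].
  by rewrite !modn_small; lia.
case: lists => _ _ /(_ i.+1 ltac:(lia)).
apply: in_cint_offset; rewrite ?ltn_pmod //; first lia.
have -> : (i.+1 + 2) * q - 1 = i.+1 * q + (2 * q - 1) by lia.
by rewrite -modnDml /start; congr (_ %% _); lia.
Qed.

Lemma offset_lower_bound i : i <= t - 1 -> psi u + q <= ofs i.
Proof.
elim: i => [_|i IH i_lt].
  rewrite /ofs /start /offset mul0n mod0n subn0 modnDr.
  by have := first_colour_bounds => /andP[? ?]; rewrite modn_small; lia.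
have start_succ : start i.+1 = (start i + q) %% p by rewrite /start modnDml mulSn addnC.
have [ofs_i colour_i] := window_offset i (ltnW i_lt).
have [ofs_i1 colour_i1] := window_offset i.+1 i_lt.
have := edge_path i (ltac:(lia)).
rewrite colour_i colour_i1 start_succ.
move/(pq_edge_offset_le q_gt0 p_ge4q (ltn_pmod _ p_gt0) ofs_i ofs_i1).
by have := IH (ltnW i_lt); lia.
Qed.

Lemma one_direction_absurd : False.
Proof.
have [ofs_last colour_last] := window_offset (t - 1) (leqnn _).
have ofs_ge := offset_lower_bound (t - 1) (leqnn _).
have := edge_path (t - 1) (ltac:(lia)).
have -> : (t - 1).+1 = t by lia.
rewrite colour_last /start window_before_last => edge_last.
case: lists => _ /(in_cint_end_window p q _ q_gt0 p_ge2q) [? ?] _.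
apply: (pq_edges_through_end_window q_gt0 p_ge4q r_lt_q psi_u _ psi_v _ _ edge_last edge_v) => //.
by rewrite ofs_ge.
Qed.

End OneDirection.

Theorem proposition3p2 (p q k r t : nat) (T : Type) (psi : T -> nat)
    (u v : T) (xuv xvu : nat -> T) :
  0 < q -> 4 * q <= p ->
  k = p %/ q -> r = p - k * q -> 1 <= r ->
  0 < t -> (t.+1 * q == r %[mod p]) ->
  (forall s, 0 < s < t -> (s.+1 * q != r %[mod p])) ->
  pq_colouring_paths p q t psi u v xuv xvu ->
  respects_lists p q t psi xuv ->
  respects_lists p q t psi xvu ->
  ~ (in_cint p 0 (q + r - 1) (psi u) && in_cint p 0 (q + r - 1) (psi v)).
Proof.
move=> q_gt0 p_ge4q k_def r_def _ t_gt0 /eqP t_cong _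
  [[e_uv e_u0 e_uP e_tv] [e_v0 e_vP e_tu]] lists_uv lists_vu.
have r_lt_q : r < q by rewrite r_def k_def {1}(divn_eq p q) addKn ltn_pmod.
clear k_def r_def k.
have window_before_last : ((t - 1) * q) %% p = r + p - 2 * q.
  apply: (modn_sub_of_addn _ (2 * q)); [lia | lia |].
  rewrite -mulnDl (_ : t - 1 + 2 = t.+1); last by lia.
  by rewrite t_cong modn_small //; lia.
have t_gt1 : 1 < t.
  case: (ltnP 1 t) => // t_le1; move: window_before_last.
  have -> : t - 1 = 0 by lia.
  by rewrite mul0n mod0n; lia.
rewrite /in_cint mod0n modn_small /=; last by lia.
move=> /andP[/andP[_ u_le] /andP[_ v_le]].
move: e_uv; rewrite /pq_edge /absdiff => /and4P[_ _ uv_far _].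
case: (ltnP (psi u) (psi v)) => uv.
- by apply: (one_direction_absurd p q r t T psi u v xuv) => //; lia.
- by apply: (one_direction_absurd p q r t T psi v u xvu) => //; lia.
Qed.
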